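(* Let $G$ be a graph with maximum degree $2$ and $k$ a positive integer. If $G$ has no path components with at least $k-1$ vertices and $0<s(G,P_k)\le 2k+1$, then $G$ has exactly one component with more than $k$ vertices, and this component is a cycle with $s(G,P_k)$ vertices.
   Context: $P_k$ is the path with $k$ vertices; $s(G,H)$ is the number of vertex subsets $X\subseteq V(G)$ such that $G[X]$ is isomorphic to $H$. *)

From mathcomp Require Import all_boot.
Set Implicit Arguments. Unset Strict Implicit. Unset Printing Implicit Defensive.

(* A finite simple graph: vertex type T : finType, adjacency e : rel T,
   assumed symmetric and irreflexive in the theorem. *)

Definition path_rel (n : nat) : rel 'I_n :=
  fun i j => (i.+1 == j :> nat) || (j.+1 == i :> nat).

Arguments path_rel n : clear implicits.

(* Cycle C_n on vertices 'I_n (meaningful for n >= 3): i ~ i+1 mod n. *)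
Definition cycle_rel (n : nat) : rel 'I_n :=
  fun i j => ((i.+1 %% n) == j :> nat) || ((j.+1 %% n) == i :> nat).

Arguments cycle_rel n : clear implicits.

Definition induced_iso (T : finType) (e : rel T) (X : {set T}) (n : nat)
  (h : rel 'I_n) : bool :=
  [exists f : {ffun 'I_n -> T},
     [&& injectiveb f, f @: setT == X &
        [forall i, forall j, e (f i) (f j) == h i j]]].

Definition s_path (T : finType) (e : rel T) (k : nat) : nat :=
  #|[set X : {set T} | induced_iso e X (path_rel k)]|.

Definition degree (T : finType) (e : rel T) (x : T) : nat := #|[set y | e x y]|.

Definition max_degree_two (T : finType) (e : rel T) : Prop :=
  (forall x, degree e x <= 2) /\ exists x, degree e x = 2.

Definition components (T : finType) (e : rel T) : {set {set T}} :=
  [set [set y | connect e x y] | x : T].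

Definition is_path_set (T : finType) (e : rel T) (C : {set T}) : bool :=
  induced_iso e C (path_rel #|C|).

Definition is_cycle_set (T : finType) (e : rel T) (C : {set T}) : bool :=
  (3 <= #|C|) && induced_iso e C (cycle_rel #|C|).

From mathcomp Require Import all_boot zify.
Set Implicit Arguments. Unset Strict Implicit. Unset Printing Implicit Defensive.

(* In a graph of maximum degree at most 2 every component is a path or a
   cycle: a longest path inside a component cannot be prolonged, so by the
   degree bound its vertex set is closed under adjacency and is the whole
   component.  An induced copy of P_k is connected, hence lies in a single
   component; path components are too small to hold one and a cycle of length
   exactly k is not a path, so it lies in a cycle of length m > k, where the
   copies are exactly the m arcs of k consecutive vertices.  Thus s(G, P_k) is
   the sum of the lengths of the cycle components longer than k; each term
   exceeds k, so s(G, P_k) <= 2k + 1 allows exactly one term. *)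

Lemma modnS_case a n : 0 < n ->
  a.+1 %% n = if (a %% n).+1 == n then 0 else (a %% n).+1.
Proof.
move=> n_gt0; rewrite -addn1 -modnDml; have : a %% n < n by lia.
case: eqP => [an _ | an lt]; first by rewrite addn1 an modnn.
rewrite modn_small; lia.
Qed.

Lemma modnDpred_case a n : 0 < n ->
  (a + n.-1) %% n = if a %% n == 0 then n.-1 else (a %% n).-1.
Proof.
move=> n_gt0; rewrite -modnDml; have : a %% n < n by lia.
case: eqP => [-> _ | an lt]; first by rewrite add0n modn_small; lia.
have -> : a %% n + n.-1 = (a %% n).-1 + n by lia.
rewrite modnDr modn_small; lia.
Qed.

Definition component (T : finType) (e : rel T) (x : T) : {set T} :=
  [set y | connect e x y].

Section Components.
Variables (T : finType) (e : rel T).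

Lemma component_in_components x : component e x \in components e.
Proof. exact: imset_f. Qed.

Lemma componentsP D : D \in components e -> exists x, D = component e x.
Proof. by case/imsetP=> x _ ->; exists x. Qed.

Hypothesis e_sym : symmetric e.

Lemma components_meet C D z :
  C \in components e -> D \in components e -> z \in C -> z \in D -> C = D.
Proof.
have compE x : z \in component e x -> component e x = component e z.
  rewrite inE => xz; apply/setP => y; rewrite !inE.
  by rewrite (same_connect (sym_connect_sym e_sym) xz).
by move=> /componentsP[x ->] /componentsP[y ->] /compE -> /compE ->.
Qed.

End Components.

Lemma degree_le2_nbr (T : finType) (e : rel T) x a b y :
  degree e x <= 2 -> e x a -> e x b -> a != b -> e x y -> (y == a) || (y == b).
Proof.
move=> deg_x xa xb ab xy; apply/negPn/negP => y_ab.
have : #|y |: [set a; b]| <= 2.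
  apply: leq_trans deg_x; apply: subset_leq_card; apply/subsetP => z.
  by rewrite !inE => /or3P[] /eqP ->.
by rewrite cardsU1 cards2 ab !inE (negbTE y_ab).
Qed.

Lemma induced_iso_card (T : finType) (e : rel T) X n (h : rel 'I_n) :
  induced_iso e X h -> #|X| = n.
Proof.
case/existsP=> f /and3P[/injectiveP f_inj /eqP <- _].
by rewrite card_imset // cardsT card_ord.
Qed.

Definition path_labelling (T : finType) (e : rel T) (G : nat -> T) k :=
  (forall a b, a < k -> b < k -> G a = G b -> a = b) /\
  (forall a b, a < k -> b < k -> e (G a) (G b) = (a.+1 == b) || (b.+1 == a)).

Section PathLabelling.
Variables (T : finType) (e : rel T).

Lemma induced_pathP X k : 0 < k ->
  induced_iso e X (path_rel k) <->
  exists G, path_labelling e G k /\ X = [set G (val i) | i in [set: 'I_k]].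
Proof.
case: k => // k _; split.
- case/existsP=> f /and3P[/injectiveP f_inj /eqP <- /forallP f_edge].
  exists (fun a => f (inord a)); split; first split.
  + by move=> a b a_lt b_lt /f_inj /(congr1 val) /=; rewrite !inordK.
  + move=> a b a_lt b_lt; move/forallP/(_ (inord b))/eqP: (f_edge (inord a)) ->.
    by rewrite /path_rel !inordK.
  + by apply: eq_imset => i; rewrite inord_val.
- case=> G [[G_inj G_edge] ->]; apply/existsP; exists [ffun i : 'I_k.+1 => G i].
  apply/and3P; split.
  + by apply/injectiveP => a b; rewrite !ffunE => /(G_inj _ _ (ltn_ord a) (ltn_ord b))/val_inj.
  + by apply/eqP/eq_imset => i; rewrite ffunE.
  + by apply/forallP => i; apply/forallP => j; rewrite !ffunE G_edge.
Qed.

Lemma path_labelling_sub_component G k : path_labelling e G k ->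
  [set G (val i) | i in [set: 'I_k]] \subset component e (G 0).
Proof.
move=> [_ G_edge]; apply/subsetP => y /imsetP[[j j_lt] _ ->]; rewrite inE /=.
elim: j j_lt => [|j IHj] j_lt; first exact: connect0.
apply: connect_trans (IHj (ltnW j_lt)) (connect1 _).
by rewrite G_edge ?eqxx // ltnW.
Qed.

End PathLabelling.

(* Vertices of the cycle are [c a] with [a] read modulo [m]; the predecessor
   of [c a] is written [c (a + m.-1)] to avoid truncated subtraction. *)
Definition cycle_labelling (T : finType) (e : rel T) (C : {set T}) m (c : nat -> T) :=
  [/\ 2 < m, forall a b, (c a == c b) = (a == b %[mod m]),
      forall a y, e (c a) y = (y == c a.+1) || (y == c (a + m.-1)) &
      C = [set c (val i) | i in [set: 'I_m]]].

Definition arc (T : finType) (c : nat -> T) k i : {set T} :=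
  [set c (i + val j) | j in [set: 'I_k]].

Lemma card_arc (T : finType) (c : nat -> T) k i : #|arc c k i| <= k.
Proof. by apply: leq_trans (leq_imset_card _ _) _; rewrite cardsT card_ord. Qed.

Section CycleLabelling.
Variables (T : finType) (e : rel T) (C : {set T}) (m : nat) (c : nat -> T).
Hypothesis c_cycle : cycle_labelling e C m c.

Let m_gt2 : 2 < m. Proof. by case: c_cycle. Qed.
Let c_eqE : forall a b, (c a == c b) = (a == b %[mod m]). Proof. by case: c_cycle. Qed.
Let c_edgeE : forall a y, e (c a) y = (y == c a.+1) || (y == c (a + m.-1)).
Proof. by case: c_cycle. Qed.
Let C_def : C = [set c (val i) | i in [set: 'I_m]]. Proof. by case: c_cycle. Qed.

Lemma cycle_eq_mod a b : a = b %[mod m] -> c a = c b.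
Proof. by move=> ab; apply/eqP; rewrite c_eqE ab. Qed.

Lemma cycle_inj a b : a < m -> b < m -> c a = c b -> a = b.
Proof. by move=> a_lt b_lt /eqP; rewrite c_eqE !modn_small // => /eqP. Qed.

Lemma cycle_mem a : c a \in C.
Proof.
rewrite C_def; apply/imsetP; exists (Ordinal (ltn_pmod a (ltnW (ltnW m_gt2)))) => //.
by apply: cycle_eq_mod; rewrite modn_mod.
Qed.

Lemma cycle_memP y : y \in C -> exists2 i, i < m & y = c i.
Proof. by rewrite C_def => /imsetP[i _ ->]; exists i. Qed.

Lemma card_cycle : #|C| = m.
Proof.
rewrite C_def card_imset ?cardsT ?card_ord // => a b.
by move/(cycle_inj (ltn_ord a) (ltn_ord b))/val_inj.
Qed.

Lemma cycle_step d a y : d = 1 \/ d = m.-1 ->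
  e (c (a + d)) y -> y = c a \/ y = c (a + d + d).
Proof.
move=> d_unit; rewrite c_edgeE => /orP[] /eqP ->; case: d_unit => ->.
- by right; congr c; lia.
- by left; apply: cycle_eq_mod; rewrite (_ : _.+1 = a + m) ?modnDr //; lia.
- by left; apply: cycle_eq_mod; rewrite (_ : _ + _ = a + m) ?modnDr //; lia.
- by right.
Qed.

Lemma cycle_walk G k i d : path_labelling e G k -> d = 1 \/ d = m.-1 ->
  G 0 = c i -> G 1 = c (i + d) -> forall j, j < k -> G j = c (i + j * d).
Proof.
move=> [G_inj G_edge] d_unit G0 G1.
suff G_step j : j.+1 < k -> G j = c (i + j * d) /\ G j.+1 = c (i + j.+1 * d).
  by case=> [|j] j_lt; [rewrite G0 addn0 | case: (G_step j j_lt)].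
elim: j => [|j IHj] j_lt; first by rewrite G0 G1 addn0 mul1n.
case: (IHj (ltnW j_lt)) => Gj Gj1; split => //.
have : e (G j.+1) (G j.+2) by rewrite G_edge ?eqxx //; lia.
rewrite Gj1 (_ : i + j.+1 * d = i + j * d + d) ?mulSnr ?addnA //.
case/(cycle_step d_unit) => [Gj2 | ->]; last by congr c; rewrite !mulSnr; lia.
by have := G_inj j j.+2; rewrite Gj -Gj2 => /(_ _ _ erefl); lia.
Qed.

Lemma arc_sub k i : arc c k i \subset C.
Proof. by apply/subsetP => y /imsetP[j _ ->]; apply: cycle_mem. Qed.

Lemma arc_mod k i : arc c k (i %% m) = arc c k i.
Proof. by apply: eq_imset => j; apply: cycle_eq_mod; rewrite modnDml. Qed.

Lemma arc_induced_path k i : 0 < k -> k < m -> induced_iso e (arc c k i) (path_rel k).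
Proof.
move=> k_gt0 k_lt; apply/(induced_pathP _ _ k_gt0).
exists (fun a => c (i + a)); split => //; split => a b a_lt b_lt.
- by move/eqP; rewrite c_eqE eqn_modDl !modn_small ?(ltn_trans _ k_lt) // => /eqP.
- rewrite c_edgeE !c_eqE -addnS eqn_modDl -addnA eqn_modDl modnDpred_case; last lia.
  by rewrite !modn_small; try lia; case: ifP; lia.
Qed.

Lemma arc_inj k i i' : 0 < k -> k < m -> i < m -> i' < m ->
  arc c k i = arc c k i' -> i = i'.
Proof.
move=> k_gt0 k_lt i_lt i'_lt arc_ii'.
have : c i \in arc c k i'.
  by rewrite -arc_ii'; apply/imsetP; exists (Ordinal k_gt0); rewrite ?addn0.
case/imsetP=> [[d d_lt] _ /= ci]; case: (posnP d) => [d0 | d_gt0].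
  by move: ci; rewrite d0 addn0; apply: cycle_inj.
have : c (i + m.-1) \in arc c k i'.
  apply/imsetP; exists (Ordinal (leq_ltn_trans (leq_pred d) d_lt)); rewrite ?in_setT //=.
  apply: cycle_eq_mod; move/eqP: ci; rewrite c_eqE => /eqP ci.
  by rewrite -modnDml ci modnDml (_ : i' + d + m.-1 = i' + d.-1 + m) ?modnDr //; lia.
rewrite -arc_ii' => /imsetP[[j j_lt] _ /=] /eqP; rewrite c_eqE eqn_modDl.
by rewrite !modn_small => [/eqP||]; lia.
Qed.

Lemma induced_path_in_cycle_walk G k i0 : path_labelling e G k -> G 0 = c i0 ->
  exists2 d, d = 1 \/ d = m.-1 & forall j, j < k -> G j = c (i0 + j * d).
Proof.
move=> G_path G0; case: (ltnP 1 k) => [k_gt1 | k_le1]; last first.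
  by exists 1 => [|j j_lt]; [left | rewrite (_ : j = 0) ?G0 ?addn0 //; lia].
have : e (G 0) (G 1) by case: G_path => _ ->; rewrite ?(ltnW k_gt1).
rewrite G0 c_edgeE => /orP[] /eqP G1.
- by exists 1; [left | apply: cycle_walk; rewrite ?addn1 //; left].
- by exists m.-1; [right | apply: cycle_walk => //; right].
Qed.

(* A backward walk from [c i0] covers the arc starting at its far end. *)
Lemma induced_path_in_cycle_arc k X : 0 < k ->
  induced_iso e X (path_rel k) -> X \subset C -> exists i : 'I_m, X = arc c k i.
Proof.
move=> k_gt0 X_path; have := induced_iso_card X_path.
case/(induced_pathP _ _ k_gt0): X_path => G [G_path ->] card_X G_sub.
have [i0 _ G0] : exists2 i0, i0 < m & G 0 = c i0.
  by apply/cycle_memP/(subsetP G_sub)/imsetP; exists (Ordinal k_gt0).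
have [d d_unit G_walk] := induced_path_in_cycle_walk G_path G0.
have [i G_arc] : exists i, forall j, j < k -> exists2 j', j' < k & G j = c (i + j').
  case: d_unit => d_def; subst d.
    by exists i0 => j j_lt; exists j; rewrite ?G_walk ?muln1.
  exists (i0 + k.-1 * m.-1) => j j_lt; exists (k.-1 - j); first lia.
  rewrite G_walk //; apply: cycle_eq_mod.
  rewrite (_ : _ + (k.-1 - j) = (k.-1 - j) * m + (i0 + j * m.-1)) ?modnMDl //.
  nia.
exists (Ordinal (ltn_pmod i (ltnW (ltnW m_gt2)))); rewrite /= arc_mod.
apply/eqP; rewrite eqEcard card_X card_arc andbT.
apply/subsetP => y /imsetP[j _ ->]; case: (G_arc j (ltn_ord j)) => j' j'_lt ->.
by apply/imsetP; exists (Ordinal j'_lt).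
Qed.

(* The endpoint [G 0] of a spanning induced path would have both cycle
   neighbours [c i0.+1] and [c (i0 + m.-1)] equal to [G 1]. *)
Lemma induced_path_in_cycle_short k X : 0 < k ->
  induced_iso e X (path_rel k) -> X \subset C -> k < m.
Proof.
move=> k_gt0 X_path X_sub; have card_X := induced_iso_card X_path.
have := subset_leq_card X_sub; rewrite card_cycle card_X leq_eqVlt.
case/orP=> [/eqP km | //]; have XC : X = C.
  by apply/eqP; rewrite eqEcard X_sub card_cycle card_X km leqnn.
case/(induced_pathP _ _ k_gt0): X_path => G [[_ G_edge] X_def].
have [i0 _ G0] : exists2 i0, i0 < m & G 0 = c i0.
  by apply/cycle_memP; rewrite -XC X_def; apply/imsetP; exists (Ordinal k_gt0).
have G0_nbr y : e (G 0) y -> y = G 1.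
  move=> G0y; have : y \in X.
    by move: G0y; rewrite XC G0 c_edgeE => /orP[] /eqP ->; apply: cycle_mem.
  rewrite X_def => /imsetP[[j j_lt] _ /= y_def]; move: G0y.
  by rewrite y_def G_edge //; case: j {j_lt y_def} => [|[|j]].
have := G0_nbr (c i0.+1); have := G0_nbr (c (i0 + m.-1)).
rewrite G0 !c_edgeE !eqxx orbT => <- // /(_ isT) /eqP.
by rewrite c_eqE -addn1 eqn_modDl !modn_small; lia.
Qed.

Lemma card_induced_paths_in_cycle k : 0 < k -> k < m ->
  #|[set X : {set T} | induced_iso e X (path_rel k) && (X \subset C)]| = m.
Proof.
move=> k_gt0 k_lt.
have -> : [set X : {set T} | induced_iso e X (path_rel k) && (X \subset C)] =
          [set arc c k (val i) | i in [set: 'I_m]].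
  apply/setP => X; rewrite inE; apply/andP/imsetP => [[X_path X_sub] | [i _ ->]].
    by case: (induced_path_in_cycle_arc k_gt0 X_path X_sub) => i ->; exists i.
  by split; [apply: arc_induced_path | apply: arc_sub].
rewrite card_imset ?cardsT ?card_ord // => i j.
by move/(arc_inj k_gt0 k_lt (ltn_ord i) (ltn_ord j))/val_inj.
Qed.

Lemma cycle_labelling_is_cycle_set : is_cycle_set e C.
Proof.
rewrite /is_cycle_set card_cycle m_gt2; apply/existsP.
exists [ffun i : 'I_m => c i]; apply/and3P; split.
- by apply/injectiveP => a b; rewrite !ffunE => /(cycle_inj (ltn_ord a) (ltn_ord b))/val_inj.
- by rewrite C_def; apply/eqP/eq_imset => i; rewrite ffunE.
- apply/forallP => i; apply/forallP => j; rewrite !ffunE c_edgeE !c_eqE /cycle_rel.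
  have i_lt := ltn_ord i; have j_lt := ltn_ord j.
  rewrite !modnS_case ?modnDpred_case; try lia.
  rewrite !(modn_small i_lt) !(modn_small j_lt); apply/eqP.
  by case: ifP => ?; case: ifP => ?; try case: ifP => ?; lia.
Qed.

End CycleLabelling.

Lemma exists_longest_path (T : finType) (e : rel T) x : exists h q,
  [/\ connect e x h, path e h q, uniq (h :: q) &
      forall h' q', connect e x h' -> path e h' q' -> uniq (h' :: q') ->
      size q' <= size q].
Proof.
pose P n := [exists h, exists q : n.-tuple T,
              [&& connect e x h, path e h q & uniq (h :: q)]].
have P0 : exists n, P n.
  by exists 0; apply/existsP; exists x; apply/existsP; exists [tuple]; rewrite connect0.
have P_bound n : P n -> n <= #|T|.
  case/existsP=> h /existsP[q /and3P[_ _ /card_uniqP hq_uniq]].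
  by have := max_card (mem (h :: tval q)); rewrite hq_uniq /= size_tuple; lia.
case: (ex_maxnP P0 P_bound) => n /existsP[h /existsP[q /and3P[x_h hq_path hq_uniq]]] n_max.
exists h, q; split => // h' q' x_h' hq_path' hq_uniq'; rewrite size_tuple.
by apply: n_max; apply/existsP; exists h'; apply/existsP; exists (in_tuple q'); apply/and3P.
Qed.

Section LongestPath.
Variables (T : finType) (e : rel T).
Hypotheses (e_sym : symmetric e) (e_irr : irreflexive e).
Hypothesis deg_le2 : forall y, degree e y <= 2.
Variables (x h : T) (q : seq T).
Hypotheses (x_h : connect e x h) (hq_path : path e h q) (hq_uniq : uniq (h :: q)).
Hypothesis hq_longest : forall h' q', connect e x h' -> path e h' q' ->
  uniq (h' :: q') -> size q' <= size q.

Local Notation n := (size q).+1.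
Local Notation v i := (nth h (h :: q) i).

Let v_eq i j : i < n -> j < n -> (v i == v j) = (i == j).
Proof. by move=> i_lt j_lt; apply: nth_uniq. Qed.

Let v_inj i j : i < n -> j < n -> v i = v j -> i = j.
Proof. by move=> i_lt j_lt /eqP; rewrite v_eq // => /eqP. Qed.

Let v_mem i : i < n -> v i \in h :: q.
Proof. by move=> i_lt; apply: mem_nth. Qed.

Let v_memP y : y \in h :: q -> exists2 i, i < n & y = v i.
Proof. by case/(nthP h) => i i_lt <-; exists i. Qed.

Let v_last : v n.-1 = last h q.
Proof. by rewrite [RHS](_ : _ = last h (h :: q)) // -nth_last. Qed.

Let v_edge i : i.+1 < n -> e (v i) (v i.+1).
Proof. by move/pathP: hq_path => /(_ h i); apply. Qed.

Let v_interior_nbr i y : 0 < i -> i.+1 < n -> e (v i) y ->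
  (y == v i.-1) || (y == v i.+1).
Proof.
move=> i_gt0 i_lt vy; apply: degree_le2_nbr (deg_le2 _) _ (v_edge i_lt) _ vy.
- by rewrite e_sym -{2}(prednK i_gt0); apply: v_edge; rewrite prednK // ltnW.
- by rewrite v_eq; lia.
Qed.

Let v_closed u y : u \in h :: q -> e u y -> y \in h :: q.
Proof.
case/v_memP=> i i_lt ->{u} vy; apply/negPn/negP => y_out.
case: (posnP i) => [i0 | i_gt0].
  move: vy; rewrite i0 /= => hy.
  have yhq_path : path e y (h :: q) by rewrite /= e_sym hy.
  have yhq_uniq : uniq (y :: h :: q) by rewrite /= y_out.
  by have := hq_longest (connect_trans x_h (connect1 hy)) yhq_path yhq_uniq; rewrite ltnn.
case: (ltnP i.+1 n) => [i_lt' | i_ge].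
  case/orP: (v_interior_nbr i_gt0 i_lt' vy) => /eqP y_def;
    by rewrite y_def v_mem in y_out; lia.
have hqy_path : path e h (rcons q y).
  by rewrite rcons_path hq_path -v_last (_ : n.-1 = i) //; lia.
have hqy_uniq : uniq (h :: rcons q y) by rewrite -rcons_cons rcons_uniq y_out.
by have := hq_longest x_h hqy_path hqy_uniq; rewrite size_rcons ltnn.
Qed.

Let component_hq : component e x = [set y in h :: q].
Proof.
have hq_closed := intro_closed (sym_connect_sym e_sym) (fun u w uw u_in => v_closed u_in uw).
apply/setP => y; rewrite !in_set; apply/idP/idP => [x_y | /v_memP[i i_lt ->]].
  by rewrite -(closed_connect hq_closed x_y) (closed_connect hq_closed x_h) mem_head.
exact: connect_trans x_h (path_connect hq_path (v_mem i_lt)).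
Qed.

Let card_component : #|component e x| = n.
Proof. by rewrite component_hq cardsE; apply/card_uniqP. Qed.

Let v_chord i j : i < n -> j < n -> e (v i) (v j) ->
  [|| i.+1 == j, j.+1 == i, (i == 0) && (j == n.-1) | (j == 0) && (i == n.-1)].
Proof.
move=> i_lt j_lt vij; have ij : i != j by apply: contraTneq vij => ->; rewrite e_irr.
have [/andP[i_gt0 i_lt'] | i_end] := boolP ((0 < i) && (i.+1 < n)).
  by case/orP: (v_interior_nbr i_gt0 i_lt' vij); rewrite !v_eq //; lia.
have [/andP[j_gt0 j_lt'] | j_end] := boolP ((0 < j) && (j.+1 < n)).
  by rewrite e_sym in vij; case/orP: (v_interior_nbr j_gt0 j_lt' vij); rewrite !v_eq //; lia.
lia.
Qed.

Let closed_longest_path_cycle : e h (last h q) -> 2 < n ->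
  cycle_labelling e (component e x) n (fun a => v (a %% n)).
Proof.
move=> h_last n_gt2; have mod_lt a : a %% n < n by rewrite ltn_mod.
split => //.
- by move=> a b; rewrite v_eq.
- move=> a y; rewrite modnS_case // modnDpred_case //.
  have := mod_lt a; move: (a %% n) => r r_lt.
  apply/idP/idP => [vy | /orP[] /eqP ->].
  + have /v_memP[j j_lt y_def] := v_closed (v_mem r_lt) vy.
    move: (v_chord r_lt j_lt); rewrite -y_def => /(_ vy).
    by rewrite y_def; case: ifP => r_last; case: ifP => r_first; rewrite !v_eq; lia.
  + case: ifP => [/eqP r_last | /negbT r_last]; last by apply: v_edge; lia.
    have -> : r = n.-1 by lia.
    by rewrite v_last e_sym.
  + case: ifP => [/eqP -> | /negbT r_pos]; first by rewrite v_last.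
    by rewrite e_sym; have := @v_edge r.-1; rewrite prednK ?lt0n //; apply.
- rewrite component_hq; apply/setP => y; rewrite inE.
  apply/idP/imsetP => [/v_memP[i i_lt ->] | [i _ ->]]; last exact: v_mem.
  by exists (Ordinal i_lt); rewrite ?in_setT //= modn_small.
Qed.

Let open_longest_path_path : ~~ (e h (last h q) && (2 < n)) ->
  is_path_set e (component e x).
Proof.
move=> not_cycle; rewrite /is_path_set card_component.
apply/(induced_pathP _ _ (ltn0Sn _)); exists (fun i => v i); split; first split.
- exact: v_inj.
- move=> a b a_lt b_lt; apply/idP/idP => [vab | /orP[] /eqP ab]; subst; last 2 first.
  + exact: v_edge.
  + by rewrite e_sym; apply: v_edge.
  have ab : a != b by apply: contraTneq vab => ->; rewrite e_irr.
  have short : e h (last h q) -> n <= 2 by move=> hl; move: not_cycle; rewrite hl /=; lia.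
  case/or4P: (v_chord a_lt b_lt vab) => [-> // | -> | /andP[] | /andP[]];
    rewrite ?orbT // => /eqP a0 /eqP b_end.
  + by move: vab; rewrite a0 b_end v_last => /short; lia.
  + by move: vab; rewrite a0 b_end v_last e_sym => /short; lia.
- rewrite component_hq; apply/setP => y; rewrite inE.
  apply/idP/imsetP => [/v_memP[i i_lt ->] | [i _ ->]]; last exact: v_mem (ltn_ord i).
  by exists (Ordinal i_lt); rewrite ?in_setT.
Qed.

Lemma longest_path_component_shape : is_path_set e (component e x) \/
  exists c, cycle_labelling e (component e x) #|component e x| c.
Proof.
rewrite card_component; case: (boolP (e h (last h q) && (2 < n))).
  case/andP=> h_last n_gt2; right; exists (fun a => v (a %% n)).
  exact: closed_longest_path_cycle.
by move=> not_cycle; left; apply: open_longest_path_path.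
Qed.

End LongestPath.

Lemma component_path_or_cycle (T : finType) (e : rel T) x :
  symmetric e -> irreflexive e -> (forall y, degree e y <= 2) ->
  is_path_set e (component e x) \/
  exists c, cycle_labelling e (component e x) #|component e x| c.
Proof.
move=> e_sym e_irr deg_le2.
have [h [q [x_h hq_path hq_uniq hq_longest]]] := exists_longest_path e x.
exact: (longest_path_component_shape e_sym e_irr deg_le2 x_h hq_path hq_uniq hq_longest).
Qed.

Section InducedPathCopies.
Variables (T : finType) (e : rel T) (k : nat).
Hypotheses (e_sym : symmetric e) (e_irr : irreflexive e).
Hypotheses (deg_le2 : forall x, degree e x <= 2) (k_gt0 : 0 < k).
Hypothesis path_components_short :
  forall C, C \in components e -> is_path_set e C -> #|C| < k.

Local Notation copies := [set X : {set T} | induced_iso e X (path_rel k)].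

Lemma big_component_cycle D : D \in components e -> k <= #|D| ->
  exists c, cycle_labelling e D #|D| c.
Proof.
case/componentsP=> x -> D_big.
case: (component_path_or_cycle x e_sym e_irr deg_le2) => // D_path.
by have := path_components_short (component_in_components e x) D_path; lia.
Qed.

Lemma copy_in_big_component X : X \in copies ->
  exists x, X \subset component e x /\ k < #|component e x|.
Proof.
rewrite inE => X_path; have card_X := induced_iso_card X_path.
have /(induced_pathP _ _ k_gt0)[G [G_path X_def]] := X_path.
have X_sub : X \subset component e (G 0).
  by rewrite X_def path_labelling_sub_component.
exists (G 0); split => //.
have k_le : k <= #|component e (G 0)| by rewrite -card_X subset_leq_card.
have [c c_cycle] := big_component_cycle (component_in_components e _) k_le.
exact: (induced_path_in_cycle_short c_cycle k_gt0 X_path X_sub).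
Qed.

Lemma card_copies_in_big_component D : D \in components e -> k < #|D| ->
  #|[set X in copies | X \subset D]| = #|D|.
Proof.
move=> D_comp D_big; have [c c_cycle] := big_component_cycle D_comp (ltnW D_big).
rewrite -(card_induced_paths_in_cycle c_cycle k_gt0 D_big).
by apply: eq_card => X; rewrite !inE.
Qed.

Lemma big_component_unique C D : C \in components e -> D \in components e ->
  k < #|C| -> k < #|D| -> #|copies| <= 2 * k + 1 -> C = D.
Proof.
move=> C_comp D_comp C_big D_big copies_le; apply/eqP/negPn/negP => CD.
pose in_comp (B : {set T}) := [set X in copies | X \subset B].
have no_common : in_comp C :&: in_comp D = set0.
  apply/setP => X; rewrite !inE; apply/negbTE/negP => /and3P[/andP[X_path XC] _ XD].
  have /set0Pn[z zX] : X != set0 by rewrite -card_gt0 (induced_iso_card X_path).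
  by case/eqP: CD; apply: components_meet (subsetP XC z zX) (subsetP XD z zX).
have := cardsUI (in_comp C) (in_comp D).
rewrite no_common cards0 addn0 !card_copies_in_big_component // => card_U.
have : #|in_comp C :|: in_comp D| <= #|copies|.
  by apply/subset_leq_card/subsetP => X; rewrite !inE => /orP[] /andP[].
lia.
Qed.

Lemma card_copies_big_component C : C \in components e -> k < #|C| ->
  (forall D, D \in components e -> k < #|D| -> D = C) -> #|copies| = #|C|.
Proof.
move=> C_comp C_big C_unique; rewrite -card_copies_in_big_component //.
apply: eq_card => X; rewrite !inE andb_idr // => X_path.
have /copy_in_big_component[x [X_sub x_big]] : X \in copies by rewrite inE.
by rewrite -(C_unique _ (component_in_components e x) x_big).
Qed.

Lemma unique_big_cycle_component : 0 < #|copies| <= 2 * k + 1 ->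
  exists C, [/\ C \in components e, k < #|C|, is_cycle_set e C,
              #|C| = #|copies| &
              forall D, D \in components e -> k < #|D| -> D = C].
Proof.
case/andP; rewrite card_gt0 => /set0Pn[X0 /copy_in_big_component[x [_ x_big]]] copies_le.
have C_comp := component_in_components e x.
have C_unique D : D \in components e -> k < #|D| -> D = component e x.
  by move=> D_comp D_big; apply: big_component_unique.
have [c c_cycle] := big_component_cycle C_comp (ltnW x_big).
exists (component e x); split => //; first exact: cycle_labelling_is_cycle_set c_cycle.
by rewrite (card_copies_big_component C_comp x_big C_unique).
Qed.

End InducedPathCopies.

Theorem lemma4p4 (T : finType) (e : rel T) (k : nat) :
  symmetric e -> irreflexive e ->
  max_degree_two e ->
  0 < k ->
  (forall C, C \in components e -> is_path_set e C -> #|C| < k.-1) ->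
  0 < s_path e k <= 2 * k + 1 ->
  exists C, [/\ C \in components e, k < #|C|, is_cycle_set e C,
              #|C| = s_path e k &
              forall D, D \in components e -> k < #|D| -> D = C].
Proof.
move=> e_sym e_irr [deg_le2 _] k_gt0 path_comps.
apply: unique_big_cycle_component => // C C_comp /(path_comps _ C_comp).
lia.
Qed.
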